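(* Let $\alpha_1,\dots,\alpha_4$ be constants, $H=H(t,t^-,q,q^-,p,p^-)$ smooth, and $X=\xi(t)\partial_t+\eta(t,q,p)\partial_q+\nu(t,q,p)\partial_p$ with $\xi(t)=\alpha t+f(t)$, where $\alpha$ is a constant and $f$ is $\tau$-periodic. Then, with $\dot\xi=D(\xi)$, $$\frac{\delta\Omega}{\delta p}\equiv X\Big(\frac{\delta\tilde H}{\delta p}\Big)+\frac{\partial\eta}{\partial p}\frac{\delta\tilde H}{\delta q}+\Big(\frac{\partial\nu}{\partial p}+\dot\xi\Big)\frac{\delta\tilde H}{\delta p},$$ $$\frac{\delta\Omega}{\delta q}\equiv X\Big(\frac{\delta\tilde H}{\delta q}\Big)+\Big(\frac{\partial\eta}{\partial q}+\dot\xi\Big)\frac{\delta\tilde H}{\delta q}+\frac{\partial\nu}{\partial q}\frac{\delta\tilde H}{\delta p},$$ $$\frac{\delta\Omega}{\delta t}\equiv X\Big(\frac{\delta\tilde H}{\delta t}\Big)+2\dot\xi\frac{\delta\tilde H}{\delta t}+\frac{\partial\eta}{\partial t}\frac{\delta\tilde H}{\delta q}+\frac{\partial\nu}{\partial t}\frac{\delta\tilde H}{\delta p}.$$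
   Context: Constant delay $\tau>0$; $t^\pm=t\pm\tau$, $f^\pm=f(t\pm\tau)$; scalar $q,p$. $S_\pm$: forward/backward shift operators on expressions ($S_+$ sends $t^-,t,q^-,q,p^-,p,\dot q^-,\dots$ to $t,t^+,q,q^+,p,p^+,\dot q,\dots$); $\xi^\pm=S_\pm(\xi)$ etc.; $H^+=S_+(H)$. $D=\partial_t+\dot q\partial_q+\dot p\partial_p+\ddot q\partial_{\dot q}+\ddot p\partial_{\dot p}+\cdots$ plus analogous terms for variables at $t^-$ and $t^+$. $\tilde H=p^{-}(\alpha_{1}\dot{q}+\alpha_{2}\dot{q}^{-})+p(\alpha_{3}\dot{q}+\alpha_{4}\dot{q}^{-})-H$. For a function $F$ of $(t,t^-,q,q^-,p,p^-,\dot q,\dot q^-,\dot p,\dot p^-)$ the variational operators are $\frac{\delta F}{\delta p}=\frac{\partial F}{\partial p}-D\frac{\partial F}{\partial\dot p}+S_+\Big(\frac{\partial F}{\partial p^-}-D\frac{\partial F}{\partial\dot p^-}\Big)$, $\frac{\delta F}{\delta q}=\frac{\partial F}{\partial q}-D\frac{\partial F}{\partial\dot q}+S_+\Big(\frac{\partial F}{\partial q^-}-D\frac{\partial F}{\partial\dot q^-}\Big)$, $\frac{\delta F}{\delta t}=\frac{\partial F}{\partial t}+D\Big(\dot q\frac{\partial F}{\partial\dot q}+\dot p\frac{\partial F}{\partial\dot p}\Big)+S_+\Big(\frac{\partial F}{\partial t^-}+D\Big(\dot q^-\frac{\partial F}{\partial\dot q^-}+\dot p^-\frac{\partial F}{\partial\dot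 p^-}\Big)\Big)-D(F)$. In particular $\frac{\delta\tilde H}{\delta p}=\alpha_1\dot q^++(\alpha_2+\alpha_3)\dot q+\alpha_4\dot q^--\partial_p(H+H^+)$, $\frac{\delta\tilde H}{\delta q}=-(\alpha_4\dot p^++(\alpha_2+\alpha_3)\dot p+\alpha_1\dot p^-+\partial_q(H+H^+))$, $\frac{\delta\tilde H}{\delta t}=D[\alpha_2(p\dot q-p^-\dot q^-)+\alpha_4(p^+\dot q-p\dot q^-)]+D(H)-\partial_t(H+H^+)$. $\Omega=X(\tilde H)+\tilde HD(\xi)=\nu^{-}(\alpha_{1}\dot{q}+\alpha_{2}\dot{q}^{-})+p^{-}(\alpha_{1}D(\eta)+\alpha_{2}D(\eta^{-}))+\nu(\alpha_{3}\dot{q}+\alpha_{4}\dot{q}^{-})+p(\alpha_{3}D(\eta)+\alpha_{4}D(\eta^{-}))+(\alpha_{2}p^{-}+\alpha_{4}p)\dot{q}^{-}D(\xi-\xi^{-})-\xi H_t-\eta H_q-\nu H_p-\xi^{-}H_{t^-}-\eta^{-}H_{q^-}-\nu^{-}H_{p^-}-HD(\xi)$. $X$ is prolonged to all variables at $t^-,t,t^+$ and their derivatives by the standard prolongation formulas: coefficient of $\partial_{\dot q}$ is $D(\eta)-\dot qD(\xi)$, of $\partial_{\dot p}$ is $D(\nu)-\dot pD(\xi)$, of $\partial_{\ddot q}$ is $D(D(\eta)-\dot qD(\xi))-\ddot qD(\xi)$, etc., and the shifted variables carry the shifted coefficients $S_\pm(\cdot)$. Variables are considered with the delay equation $t^+-t=t-t^-=\tau$.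 *)

From Stdlib Require Import Reals ZArith List.
From Coquelicot Require Import Coquelicot.
Open Scope R_scope.

(** * Jet space with delay levels
    Coordinates: [CT k] = t^(k) (the time variable at level k, i.e. t+kτ,
    treated as an independent coordinate), [CQ k n] = n-th derivative of q
    at level k, [CP k n] = n-th derivative of p at level k.
    Level -1 = "t^-", 0 = "t", 1 = "t^+". *)
Inductive coord := CT (k : Z) | CQ (k : Z) (n : nat) | CP (k : Z) (n : nat).

Definition coord_eq_dec : forall a b : coord, {a = b} + {a <> b}.
Proof. decide equality; auto using Z.eq_dec, Nat.eq_dec. Defined.

Definition Jet := coord -> R.
Definition JFun := Jet -> R.

Definition upd (x : Jet) (c : coord) (s : R) : Jet :=
  fun c' => if coord_eq_dec c' c then s else x c'.

Definition pd (c : coord) (F : JFun) : JFun :=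
  fun x => Derive (fun s => F (upd x c s)) (x c).

Definition dirder (v : Jet -> Jet) (F : JFun) : JFun :=
  fun x => Derive (fun s => F (fun c => x c + s * v x c)) 0.

Definition Dvf : Jet -> Jet := fun x c =>
  match c with
  | CT _ => 1
  | CQ k n => x (CQ k (S n))
  | CP k n => x (CP k (S n))
  end.
Definition Dt (F : JFun) : JFun := dirder Dvf F.

Definition shift (m : Z) (x : Jet) : Jet := fun c =>
  match c with
  | CT k => x (CT (k + m)%Z)
  | CQ k n => x (CQ (k + m)%Z n)
  | CP k n => x (CP (k + m)%Z n)
  end.
Definition Sp (F : JFun) : JFun := fun x => F (shift 1 x).

(** * Variational operators (for F depending on t,t^-,q,q^-,p,p^- and first derivatives) *)
Definition var_p (F : JFun) : JFun := fun x =>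
  pd (CP 0 0) F x - Dt (pd (CP 0 1) F) x
  + Sp (fun y => pd (CP (-1) 0) F y - Dt (pd (CP (-1) 1) F) y) x.

Definition var_q (F : JFun) : JFun := fun x =>
  pd (CQ 0 0) F x - Dt (pd (CQ 0 1) F) x
  + Sp (fun y => pd (CQ (-1) 0) F y - Dt (pd (CQ (-1) 1) F) y) x.

Definition var_t (F : JFun) : JFun := fun x =>
  pd (CT 0) F x
  + Dt (fun y => y (CQ 0 1) * pd (CQ 0 1) F y + y (CP 0 1) * pd (CP 0 1) F y) x
  + Sp (fun y => pd (CT (-1)) F y
          + Dt (fun z => z (CQ (-1) 1) * pd (CQ (-1) 1) F z
                         + z (CP (-1) 1) * pd (CP (-1) 1) F z) y) x
  - Dt F x.

Definition Hj (H : R -> R -> R -> R -> R -> R -> R) : JFun := fun x =>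
  H (x (CT 0)) (x (CT (-1))) (x (CQ 0 0)) (x (CQ (-1) 0)) (x (CP 0 0)) (x (CP (-1) 0)).

Definition Htilde (a1 a2 a3 a4 : R) (H : R -> R -> R -> R -> R -> R -> R) : JFun :=
  fun x => x (CP (-1) 0) * (a1 * x (CQ 0 1) + a2 * x (CQ (-1) 1))
         + x (CP 0 0) * (a3 * x (CQ 0 1) + a4 * x (CQ (-1) 1)) - Hj H x.

Definition xi_at (xi : R -> R) (k : Z) : JFun := fun x => xi (x (CT k)).
Definition g_at (g : R -> R -> R -> R) (k : Z) : JFun :=
  fun x => g (x (CT k)) (x (CQ k 0)) (x (CP k 0)).

Fixpoint prol (xi : R -> R) (g : R -> R -> R -> R) (isq : bool) (k : Z) (n : nat) : JFun :=
  match n with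
  | O => g_at g k
  | S m => fun x => Dt (prol xi g isq k m) x
                    - x (if isq then CQ k (S m) else CP k (S m)) * Dt (xi_at xi k) x
  end.

Definition Xvf (xi : R -> R) (eta nu : R -> R -> R -> R) : Jet -> Jet := fun x c =>
  match c with
  | CT k => xi_at xi k x
  | CQ k n => prol xi eta true k n x
  | CP k n => prol xi nu false k n x
  end.

Definition Xop (xi : R -> R) (eta nu : R -> R -> R -> R) (F : JFun) : JFun :=
  dirder (Xvf xi eta nu) F.

Definition Omega (xi : R -> R) (eta nu : R -> R -> R -> R) (Ht : JFun) : JFun :=
  fun x => Xop xi eta nu Ht x + Ht x * Dt (xi_at xi 0) x.

Definition delay (tau : R) (x : Jet) : Prop :=
  forall k : Z, x (CT k) = x (CT 0) + IZR k * tau.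

Definition depends_only (S : list coord) (F : JFun) : Prop :=
  forall x y : Jet, (forall c, In c S -> x c = y c) -> F x = F y.

Definition iter_pd (cs : list coord) (F : JFun) : JFun :=
  fold_right (fun c G => pd c G) F cs.

Definition cont_on (S : list coord) (G : JFun) : Prop :=
  forall (x : Jet) (eps : R), 0 < eps -> exists delta, 0 < delta /\
    forall y : Jet, (forall c, In c S -> Rabs (y c - x c) < delta) ->
      Rabs (G y - G x) < eps.

Definition smooth_jet (S : list coord) (F : JFun) : Prop :=
  depends_only S F /\
  forall cs : list coord, (forall c, In c cs -> In c S) ->
    cont_on S (iter_pd cs F) /\
    forall (x : Jet) (c : coord), In c S ->
      ex_derive (fun s => iter_pd cs F (upd x c s)) (x c).

Definition smooth6 (H : R -> R -> R -> R -> R -> R -> R) : Prop :=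
  smooth_jet (CT 0 :: CT (-1) :: CQ 0 0 :: CQ (-1) 0 :: CP 0 0 :: CP (-1) 0 :: nil) (Hj H).

Definition smooth3 (g : R -> R -> R -> R) : Prop :=
  smooth_jet (CT 0 :: CQ 0 0 :: CP 0 0 :: nil) (g_at g 0).

Definition smooth1 (f : R -> R) : Prop :=
  forall (n : nat) (t : R), ex_derive (Derive_n f n) t.

From Pilot Require Import Defs.
From Stdlib Require Import Reals ZArith List.
From Coquelicot Require Import Coquelicot.
Open Scope R_scope.
From Stdlib Require Import Lra Lia FunctionalExtensionality Permutation Mergesort.
Import ListNotations.

(* Every quantity in the three identities is a polynomial in finitely many
   atoms: jet coordinates, iterated partial derivatives of H, eta and nu at
   shifted jets, the values f^(n)(t^(k)), and the constants alpha, a_i.  By the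
   chain rule (valid since all data have continuous partial derivatives) the
   operators D, X, d/dc and S_+ act on such polynomials by explicit symbolic
   rules, so both sides of each identity are values of symbolic expressions.
   Ordering mixed partial derivatives (Schwarz) and replacing f^(n)(t^(k)) by
   f^(n)(t), which the delay equation t^(k) = t + k tau and the tau-periodicity
   of f allow (this is why D(xi^-) = D(xi) = D(xi^+)), the difference of the two
   sides normalizes to the zero polynomial. *)

(** * Calculus on jets *)

Lemma upd_eq x c s : upd x c s c = s.
Proof. unfold upd; destruct (coord_eq_dec c c); congruence. Qed.

Lemma upd_neq x c c' s : c' <> c -> upd x c s c' = x c'.
Proof. intro H; unfold upd; destruct (coord_eq_dec c' c); congruence. Qed.

Lemma upd_id x c : upd x c (x c) = x.
Proof.
  apply functional_extensionality; intro c'; unfold upd.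
  destruct (coord_eq_dec c' c); subst; reflexivity.
Qed.

Lemma upd_upd x c u v : upd (upd x c u) c v = upd x c v.
Proof.
  apply functional_extensionality; intro c'; unfold upd.
  destruct (coord_eq_dec c' c); reflexivity.
Qed.

Lemma upd_comm x a b u v : a <> b -> upd (upd x a u) b v = upd (upd x b v) a u.
Proof.
  intro H; apply functional_extensionality; intro c'; unfold upd.
  destruct (coord_eq_dec c' a), (coord_eq_dec c' b); subst; congruence.
Qed.

Lemma depends_only_pd S G c :
  In c S -> depends_only S G -> depends_only S (pd c G).
Proof.
  intros Hc HG x y Hxy. unfold pd. rewrite (Hxy c Hc). f_equal.
  apply functional_extensionality; intro s. apply HG. intros c' Hc'. unfold upd.
  destruct (coord_eq_dec c' c); auto.
Qed.

Lemma depends_only_iter_pd S F cs :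
  (forall c, In c cs -> In c S) -> depends_only S F -> depends_only S (iter_pd cs F).
Proof.
  induction cs as [|c cs IH]; intros Hcs HF; simpl; auto.
  apply depends_only_pd; auto with datatypes.
Qed.

Definition line (x u : Jet) (s : R) : Jet := fun c => x c + s * u c.

Definition restrict (L : list coord) (u : Jet) : Jet :=
  fun c => if in_dec coord_eq_dec c L then u c else 0.

Definition sum_over (L : list coord) (g : coord -> R) : R :=
  fold_right (fun c r => g c + r) 0 L.

Lemma sum_over_nonneg L g : (forall c, 0 <= g c) -> 0 <= sum_over L g.
Proof. intro Hg; induction L as [|c L IH]; simpl; [lra|]. pose proof (Hg c); lra. Qed.

Lemma le_sum_over L g c : (forall c, 0 <= g c) -> In c L -> g c <= sum_over L g.
Proof.
  intros Hg; induction L as [|a L IH]; simpl; intros Hc; [contradiction|].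
  pose proof (sum_over_nonneg L g Hg). pose proof (Hg a).
  destruct Hc as [<-|Hc]; [lra|]. specialize (IH Hc); lra.
Qed.

Lemma line_0 x u : line x u 0 = x.
Proof. apply functional_extensionality; intro c; unfold line; ring. Qed.

Lemma shift_line k x u s : Defs.shift k (line x u s) = line (Defs.shift k x) (Defs.shift k u) s.
Proof. apply functional_extensionality; intro c; destruct c; reflexivity. Qed.

Lemma shift_shift k m x : Defs.shift k (Defs.shift m x) = Defs.shift (k + m) x.
Proof.
  apply functional_extensionality; intro c; destruct c; simpl;
  rewrite Z.add_assoc; reflexivity.
Qed.

Lemma cont_on_perturb S K x u eps : cont_on S K -> 0 < eps ->
  exists delta, 0 < delta /\ forall h z, Rabs h < delta ->
    (forall c, In c S -> Rabs (z c - x c) <= Rabs h * Rabs (u c)) ->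
    Rabs (K z - K x) < eps.
Proof.
  intros HK Heps.
  set (M := sum_over S (fun c => Rabs (u c)) + 1).
  assert (HM : 0 < M).
  { pose proof (sum_over_nonneg S (fun c => Rabs (u c)) (fun c => Rabs_pos _)). unfold M; lra. }
  destruct (HK x eps Heps) as [d [Hd Hcont]].
  exists (d / M); split; [apply Rdiv_lt_0_compat; lra|].
  intros h z Hh Hz. apply Hcont. intros c Hc.
  assert (Hu : Rabs (u c) <= M).
  { pose proof (le_sum_over S (fun c => Rabs (u c)) c (fun c => Rabs_pos _) Hc). unfold M; lra. }
  apply Rle_lt_trans with (Rabs h * M).
  - eapply Rle_trans; [exact (Hz c Hc)|]. apply Rmult_le_compat_l; [apply Rabs_pos|exact Hu].
  - apply Rmult_lt_reg_r with (/ M); [apply Rinv_0_lt_compat; lra|].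
    rewrite Rmult_assoc, Rinv_r, Rmult_1_r by lra. exact Hh.
Qed.

Lemma Rabs_sub_between a b t : Rmin a b <= t <= Rmax a b -> Rabs (t - a) <= Rabs (b - a).
Proof.
  unfold Rmin, Rmax; destruct (Rle_dec a b); intros [H1 H2];
  unfold Rabs; destruct (Rcase_abs (t - a)), (Rcase_abs (b - a)); lra.
Qed.

Section LineChainRule.
Variables (S : list coord) (G : JFun).
Hypothesis G_dep : depends_only S G.
Hypothesis G_pd_ex : forall c y, In c S -> ex_derive (fun s => G (upd y c s)) (y c).
Hypothesis G_pd_cont : forall c, In c S -> cont_on S (pd c G).

Lemma is_derive_upd y c t : In c S -> is_derive (fun s => G (upd y c s)) t (pd c G (upd y c t)).
Proof.
  intro Hc.
  assert (E : forall s, G (upd (upd y c t) c s) = G (upd y c s))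
    by (intro; now rewrite upd_upd).
  unfold pd. rewrite upd_eq, (Derive_ext _ _ _ E). apply Derive_correct.
  pose proof (G_pd_ex c (upd y c t) Hc) as H. rewrite upd_eq in H.
  exact (ex_derive_ext _ _ _ E H).
Qed.

Lemma MVT_upd y c b : In c S ->
  exists th, Rabs (th - y c) <= Rabs (b - y c) /\
    G (upd y c b) - G y = pd c G (upd y c th) * (b - y c).
Proof.
  intro Hc.
  destruct (MVT_gen (fun s => G (upd y c s)) (y c) b (fun t => pd c G (upd y c t)))
    as [th [Hth Heq]].
  - intros t _. now apply is_derive_upd.
  - intros t _. apply derivable_continuous_pt. exists (pd c G (upd y c t)).
    apply is_derive_Reals, is_derive_upd, Hc.
  - exists th. split; [now apply Rabs_sub_between|]. now rewrite upd_id in Heq.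
Qed.

Lemma is_derive_upd_increment x u (y : R -> Jet) c : In c S ->
  (forall s, y s c = x c) ->
  (forall s c', In c' S -> Rabs (y s c' - x c') <= Rabs s * Rabs (u c')) ->
  is_derive (fun s => G (upd (y s) c (x c + s * u c)) - G (y s)) 0 (u c * pd c G x).
Proof.
  intros Hc Hyc Hy. apply is_derive_Reals. intros eps Heps.
  assert (Hu1 : 0 < Rabs (u c) + 1) by (pose proof (Rabs_pos (u c)); lra).
  destruct (cont_on_perturb S (pd c G) x u (eps / (2 * (Rabs (u c) + 1))) (G_pd_cont c Hc))
    as [d [Hd Hcont]].
  { apply Rdiv_lt_0_compat; lra. }
  exists (mkposreal d Hd). intros h Hh0 Hh. simpl in Hh.
  replace (G (upd (y 0) c (x c + 0 * u c)) - G (y 0)) with 0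
    by now rewrite Rmult_0_l, Rplus_0_r, <- (Hyc 0), upd_id, Rminus_diag.
  rewrite Rplus_0_l, Rminus_0_r.
  destruct (MVT_upd (y h) c (x c + h * u c) Hc) as [th [Hth Heq]].
  rewrite Hyc in Hth, Heq. replace (x c + h * u c - x c) with (h * u c) in * by ring.
  rewrite Heq.
  replace (pd c G (upd (y h) c th) * (h * u c) / h - u c * pd c G x)
    with (u c * (pd c G (upd (y h) c th) - pd c G x)) by (field; exact Hh0).
  assert (Hz : Rabs (pd c G (upd (y h) c th) - pd c G x) < eps / (2 * (Rabs (u c) + 1))).
  { apply Hcont with h; [exact Hh|]. intros c' Hc'. unfold upd.
    destruct (coord_eq_dec c' c) as [->|]; [now rewrite <- Rabs_mult|auto]. }
  rewrite Rabs_mult.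
  apply Rle_lt_trans with ((Rabs (u c) + 1) * (eps / (2 * (Rabs (u c) + 1)))).
  - apply Rmult_le_compat; try apply Rabs_pos; lra.
  - replace ((Rabs (u c) + 1) * (eps / (2 * (Rabs (u c) + 1)))) with (eps / 2) by (field; lra).
    lra.
Qed.

Lemma is_derive_restricted_line x u L : NoDup L -> (forall c, In c L -> In c S) ->
  is_derive (fun s => G (line x (restrict L u) s)) 0
    (sum_over L (fun c => u c * pd c G x)).
Proof.
  induction L as [|c L IH]; intros HN HL; simpl.
  - apply (is_derive_ext (fun _ => G x)); [|exact (is_derive_const (G x) 0)].
    intro s. f_equal. apply functional_extensionality; intro c.
    unfold line, restrict; simpl; ring.
  - inversion HN as [|? ? Hc HN']; subst.
    set (y := line x (restrict L u)).
    assert (Hyc : forall s, y s c = x c).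
    { intro s. unfold y, line, restrict. destruct (in_dec coord_eq_dec c L); [contradiction|ring]. }
    assert (Hy : forall s c', In c' S -> Rabs (y s c' - x c') <= Rabs s * Rabs (u c')).
    { intros s c' _. unfold y, line, restrict. destruct (in_dec coord_eq_dec c' L).
      - replace (x c' + s * u c' - x c') with (s * u c') by ring. rewrite Rabs_mult; lra.
      - replace (x c' + s * 0 - x c') with 0 by ring. rewrite Rabs_R0.
        apply Rmult_le_pos; apply Rabs_pos. }
    assert (Hlin : forall s, line x (restrict (c :: L) u) s = upd (y s) c (x c + s * u c)).
    { intro s; apply functional_extensionality; intro c'. unfold upd, y, line, restrict.
      destruct (coord_eq_dec c' c) as [->|Hne].
      - destruct (in_dec coord_eq_dec c (c :: L)) as [_|n]; [reflexivity|now destruct n; left].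
      - destruct (in_dec coord_eq_dec c' (c :: L)) as [[|]|n], (in_dec coord_eq_dec c' L);
        try congruence; try contradiction. now destruct n; right. }
    pose proof (is_derive_plus _ _ 0 _ _
      (is_derive_upd_increment x u y c (HL c (or_introl eq_refl)) Hyc Hy)
      (IH HN' (fun c' H => HL c' (or_intror H)))) as D.
    apply (is_derive_ext _ _ _ _ (fun s => f_equal G (eq_sym (Hlin s)))).
    refine (is_derive_ext _ _ _ _ _ D). intro s. unfold plus; simpl.
    rewrite Rplus_comm. apply Rplus_minus.
Qed.

Lemma is_derive_line x u : NoDup S ->
  is_derive (fun s => G (line x u s)) 0 (sum_over S (fun c => u c * pd c G x)).
Proof.
  intro HN. apply (is_derive_ext (fun s => G (line x (restrict S u) s))).
  - intro s. apply G_dep. intros c Hc.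
    unfold line, restrict. destruct (in_dec coord_eq_dec c S); [reflexivity|contradiction].
  - apply is_derive_restricted_line; auto.
Qed.
End LineChainRule.

Lemma pd_upd2_snd (K : JFun) a b y u v :
  pd b K (upd (upd y a u) b v) = Derive (fun t => K (upd (upd y a u) b t)) v.
Proof.
  unfold pd. rewrite upd_eq. apply Derive_ext; intro t. now rewrite upd_upd.
Qed.

Lemma upd_upd_fst y a b u v s : a <> b -> upd (upd (upd y a u) b v) a s = upd (upd y a s) b v.
Proof. intro H. rewrite upd_comm, upd_upd by congruence. reflexivity. Qed.

Lemma pd_upd2_fst (K : JFun) a b y u v : a <> b ->
  pd a K (upd (upd y a u) b v) = Derive (fun t => K (upd (upd y a t) b v)) u.
Proof.
  intro H. unfold pd. rewrite upd_neq, upd_eq by congruence.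
  apply Derive_ext; intro t. now rewrite upd_upd_fst.
Qed.

Lemma ex_derive_upd2_fst (K : JFun) a b y u v : a <> b ->
  (forall X, ex_derive (fun s => K (upd X a s)) (X a)) ->
  ex_derive (fun z => K (upd (upd y a z) b v)) u.
Proof.
  intros H HK. specialize (HK (upd (upd y a u) b v)).
  rewrite upd_neq, upd_eq in HK by congruence.
  refine (ex_derive_ext _ _ _ _ HK). intro t. now rewrite upd_upd_fst.
Qed.

Lemma ex_derive_upd2_snd (K : JFun) a b y u v :
  (forall X, ex_derive (fun s => K (upd X b s)) (X b)) ->
  ex_derive (fun z => K (upd (upd y a u) b z)) v.
Proof.
  intro HK. specialize (HK (upd (upd y a u) b v)). rewrite upd_eq in HK.
  refine (ex_derive_ext _ _ _ _ HK). intro t. now rewrite upd_upd.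
Qed.

Lemma cont_on_2d S K y a b : cont_on S K ->
  continuity_2d_pt (fun u v => K (upd (upd y a u) b v)) (y a) (y b).
Proof.
  intros HK eps. destruct (HK y eps (cond_pos eps)) as [d [Hd H]].
  exists (mkposreal d Hd). intros u v Hu Hv. simpl in Hu, Hv.
  rewrite !upd_id. apply H. intros c _. unfold upd.
  destruct (coord_eq_dec c b) as [->|]; [assumption|].
  destruct (coord_eq_dec c a) as [->|]; [assumption|].
  now rewrite Rminus_diag, Rabs_R0.
Qed.

Lemma pd_comm S (G : JFun) a b : a <> b ->
  (forall X, ex_derive (fun s => G (upd X a s)) (X a)) ->
  (forall X, ex_derive (fun s => G (upd X b s)) (X b)) ->
  (forall X, ex_derive (fun s => pd b G (upd X a s)) (X a)) ->
  (forall X, ex_derive (fun s => pd a G (upd X b s)) (X b)) ->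
  cont_on S (pd a (pd b G)) -> cont_on S (pd b (pd a G)) ->
  pd a (pd b G) = pd b (pd a G).
Proof.
  intros Hab HGa HGb HGba HGab Cab Cba.
  apply functional_extensionality; intro y.
  set (f2 := fun u v => G (upd (upd y a u) b v)).
  assert (Eab : forall u v, pd a (pd b G) (upd (upd y a u) b v)
                          = Derive (fun z => Derive (fun t => f2 z t) v) u).
  { intros u v. rewrite pd_upd2_fst by exact Hab.
    apply Derive_ext; intro z. apply pd_upd2_snd. }
  assert (Eba : forall u v, pd b (pd a G) (upd (upd y a u) b v)
                          = Derive (fun z => Derive (fun t => f2 t z) u) v).
  { intros u v. rewrite pd_upd2_snd.
    apply Derive_ext; intro z. now apply pd_upd2_fst. }
  assert (Ey : y = upd (upd y a (y a)) b (y b)) by now rewrite !upd_id.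
  rewrite Ey at 1 2. rewrite Eab, Eba.
  apply Schwarz.
  - exists (mkposreal 1 Rlt_0_1). intros u v _ _. repeat split.
    + now apply ex_derive_upd2_fst.
    + now apply ex_derive_upd2_snd.
    + apply (ex_derive_ext (fun z => pd b G (upd (upd y a z) b v))).
      { intro z. apply pd_upd2_snd. }
      now apply ex_derive_upd2_fst.
    + apply (ex_derive_ext (fun z => pd a G (upd (upd y a u) b z))).
      { intro z. now apply pd_upd2_fst. }
      now apply ex_derive_upd2_snd.
  - apply (continuity_2d_pt_ext (fun u v => pd a (pd b G) (upd (upd y a u) b v))).
    { intros u v. apply Eab. }
    now apply cont_on_2d with S.
  - apply (continuity_2d_pt_ext (fun u v => pd b (pd a G) (upd (upd y a u) b v))).
    { intros u v. apply Eba. }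
    now apply cont_on_2d with S.
Qed.

Lemma pd_comm_iter_pd S F L a b : smooth_jet S F -> In a S -> In b S ->
  (forall c, In c L -> In c S) ->
  pd a (pd b (iter_pd L F)) = pd b (pd a (iter_pd L F)).
Proof.
  intros [_ Hsm] Ha Hb HL.
  destruct (coord_eq_dec a b) as [->|Hab]; [reflexivity|].
  assert (Hex : forall L', (forall c, In c L' -> In c S) ->
            forall X c, In c S -> ex_derive (fun s => iter_pd L' F (upd X c s)) (X c))
    by (intros L' HL'; exact (proj2 (Hsm L' HL'))).
  assert (Hcont : forall L', (forall c, In c L' -> In c S) -> cont_on S (iter_pd L' F))
    by (intros L' HL'; exact (proj1 (Hsm L' HL'))).
  apply (pd_comm S).
  - exact Hab.
  - intro X. now apply Hex.
  - intro X. now apply Hex.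
  - intro X. apply (Hex (b :: L)); [intros c [<-|Hc]|]; auto.
  - intro X. apply (Hex (a :: L)); [intros c [<-|Hc]|]; auto.
  - apply (Hcont (a :: b :: L)). intros c [<-|[<-|Hc]]; auto.
  - apply (Hcont (b :: a :: L)). intros c [<-|[<-|Hc]]; auto.
Qed.

Lemma iter_pd_Permutation S F L L' : smooth_jet S F -> Permutation L L' ->
  (forall c, In c L -> In c S) -> iter_pd L F = iter_pd L' F.
Proof.
  intros HF HP. induction HP as [|c L L' HP IH|a b L|L1 L2 L3 HP12 IH12 HP23 IH23];
    intro HL; simpl.
  - reflexivity.
  - f_equal. apply IH. intros c' Hc'. apply HL. now right.
  - apply pd_comm_iter_pd with S; auto with datatypes.
  - rewrite IH12 by exact HL. apply IH23.
    intros c Hc. apply HL, (Permutation_in c (Permutation_sym HP12) Hc).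
Qed.

Lemma periodic_IZR (g : R -> R) tau : (forall t, g (t + tau) = g t) ->
  forall k t, g (t + IZR k * tau) = g t.
Proof.
  intros Hg.
  assert (Hnat : forall n t, g (t + INR n * tau) = g t).
  { induction n as [|n IH]; intro t.
    - simpl. now rewrite Rmult_0_l, Rplus_0_r.
    - rewrite S_INR, <- (IH t), <- (Hg (t + INR n * tau)). f_equal. ring. }
  intros [|p|p] t.
  - now rewrite Rmult_0_l, Rplus_0_r.
  - change (IZR (Z.pos p)) with (IPR p). rewrite <- INR_IPR. apply Hnat.
  - change (IZR (Z.neg p)) with (- IPR p).
    rewrite <- INR_IPR, <- (Hnat (Pos.to_nat p) (t + - INR (Pos.to_nat p) * tau)).
    f_equal. ring.
Qed.

Lemma Derive_n_periodic f tau : smooth1 f -> (forall t, f (t + tau) = f t) ->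
  forall n t, Derive_n f n (t + tau) = Derive_n f n t.
Proof.
  intros Hf Hper. induction n as [|n IH]; intro t; simpl; [apply Hper|].
  rewrite <- (Derive_ext _ _ t (fun u => IH u)).
  symmetry. apply is_derive_unique.
  replace (Derive (Derive_n f n) (t + tau)) with (1 * Derive (Derive_n f n) (t + tau)) by ring.
  apply (is_derive_comp (Derive_n f n) (fun u => u + tau)).
  - apply Derive_correct, Hf.
  - auto_derive; auto.
Qed.

Lemma is_derive_affine (a b : R) : is_derive (fun s => a + s * b) 0 b.
Proof. auto_derive; [exact I|ring]. Qed.

Lemma is_derive_comp_affine (g : R -> R) a b : (forall t, ex_derive g t) ->
  is_derive (fun s => g (a + s * b)) 0 (b * Derive g a).
Proof.
  intro Hg.
  apply (is_derive_comp g (fun s => a + s * b)); [|apply is_derive_affine].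
  rewrite Rmult_0_l, Rplus_0_r. apply Derive_correct, Hg.
Qed.

(** * Symbolic jet expressions *)

Inductive datum := DH | DEta | DNu.

Definition datum_vars (d : datum) : list coord :=
  match d with
  | DH => [CT 0; CT (-1); CQ 0 0; CQ (-1) 0; CP 0 0; CP (-1) 0]
  | DEta | DNu => [CT 0; CQ 0 0; CP 0 0]
  end.

Definition datum_var (d : datum) (i : nat) : coord := nth i (datum_vars d) (CT 0).

(** [ADer d l k] is the iterated partial derivative of the datum [d] in the
    variables [map (datum_var d) l], evaluated at the jet shifted by [k];
    [AFder n k] is [f^(n)(t^(k))]; [AParam i] is the [i]-th of [alpha, a1, .., a4]. *)
Inductive atom :=
  | AVar (c : coord)
  | ADer (d : datum) (l : list nat) (k : Z)
  | AFder (n : nat) (k : Z)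
  | AParam (i : nat).

Inductive jexpr :=
  | ECst (z : Z)
  | EAdd (a b : jexpr)
  | EMul (a b : jexpr)
  | EAtom (a : atom).

Definition EVar (c : coord) : jexpr := EAtom (AVar c).
Definition ESub (a b : jexpr) : jexpr := EAdd a (EMul (ECst (-1)) b).
Definition ESum (l : list jexpr) : jexpr := fold_right EAdd (ECst 0) l.

Definition shift_coord (m : Z) (c : coord) : coord :=
  match c with
  | CT k => CT (k + m)
  | CQ k n => CQ (k + m) n
  | CP k n => CP (k + m) n
  end.

Definition shift_atom (m : Z) (a : atom) : atom :=
  match a with
  | AVar c => AVar (shift_coord m c)
  | ADer d l k => ADer d l (k + m)
  | AFder n k => AFder n (k + m)
  | AParam i => AParam i
  end.

Fixpoint shift_expr (m : Z) (e : jexpr) : jexpr :=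
  match e with
  | ECst z => ECst z
  | EAdd a b => EAdd (shift_expr m a) (shift_expr m b)
  | EMul a b => EMul (shift_expr m a) (shift_expr m b)
  | EAtom a => EAtom (shift_atom m a)
  end.

Fixpoint deriv (w : coord -> jexpr) (e : jexpr) : jexpr :=
  match e with
  | ECst _ => ECst 0
  | EAdd a b => EAdd (deriv w a) (deriv w b)
  | EMul a b => EAdd (EMul (deriv w a) b) (EMul a (deriv w b))
  | EAtom (AVar c) => w c
  | EAtom (ADer d l k) =>
      ESum (map (fun i => EMul (w (shift_coord k (datum_var d i))) (EAtom (ADer d (i :: l) k)))
                (seq 0 (length (datum_vars d))))
  | EAtom (AFder n k) => EMul (w (CT k)) (EAtom (AFder (S n) k))
  | EAtom (AParam _) => ECst 0
  end.

Definition total_field (c : coord) : jexpr :=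
  match c with
  | CT _ => ECst 1
  | CQ k n => EVar (CQ k (S n))
  | CP k n => EVar (CP k (S n))
  end.

Definition unit_field (c c' : coord) : jexpr :=
  if coord_eq_dec c' c then ECst 1 else ECst 0.

Definition eD : jexpr -> jexpr := deriv total_field.
Definition epd (c : coord) : jexpr -> jexpr := deriv (unit_field c).

Definition exi (k : Z) : jexpr := EAdd (EMul (EAtom (AParam 0)) (EVar (CT k))) (EAtom (AFder 0 k)).

Fixpoint eprol (isq : bool) (k : Z) (n : nat) : jexpr :=
  match n with
  | O => EAtom (ADer (if isq then DEta else DNu) [] k)
  | S m => ESub (eD (eprol isq k m))
               (EMul (EVar (if isq then CQ k (S m) else CP k (S m))) (eD (exi k)))
  end.

Definition X_field (c : coord) : jexpr :=
  match c with
  | CT k => exi k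
  | CQ k n => eprol true k n
  | CP k n => eprol false k n
  end.

Definition eX : jexpr -> jexpr := deriv X_field.

Definition evar_p (F : jexpr) : jexpr :=
  EAdd (ESub (epd (CP 0 0) F) (eD (epd (CP 0 1) F)))
       (shift_expr 1 (ESub (epd (CP (-1) 0) F) (eD (epd (CP (-1) 1) F)))).

Definition evar_q (F : jexpr) : jexpr :=
  EAdd (ESub (epd (CQ 0 0) F) (eD (epd (CQ 0 1) F)))
       (shift_expr 1 (ESub (epd (CQ (-1) 0) F) (eD (epd (CQ (-1) 1) F)))).

Definition emomenta (k : Z) (F : jexpr) : jexpr :=
  EAdd (EMul (EVar (CQ k 1)) (epd (CQ k 1) F)) (EMul (EVar (CP k 1)) (epd (CP k 1) F)).

Definition evar_t (F : jexpr) : jexpr :=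
  ESub (EAdd (EAdd (epd (CT 0) F) (eD (emomenta 0 F)))
             (shift_expr 1 (EAdd (epd (CT (-1)) F) (eD (emomenta (-1) F)))))
       (eD F).

Definition eHtilde : jexpr :=
  ESub (EAdd (EMul (EVar (CP (-1) 0))
                   (EAdd (EMul (EAtom (AParam 1)) (EVar (CQ 0 1)))
                         (EMul (EAtom (AParam 2)) (EVar (CQ (-1) 1)))))
             (EMul (EVar (CP 0 0))
                   (EAdd (EMul (EAtom (AParam 3)) (EVar (CQ 0 1)))
                         (EMul (EAtom (AParam 4)) (EVar (CQ (-1) 1))))))
       (EAtom (ADer DH [] 0)).

Definition exidot : jexpr := eD (exi 0).
Definition eOmega : jexpr := EAdd (eX eHtilde) (EMul eHtilde exidot).
Definition eeta : jexpr := EAtom (ADer DEta [] 0).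
Definition enu : jexpr := EAtom (ADer DNu [] 0).

Definition monomial := list atom.
Definition polynomial := list (Z * monomial).

Definition coord_key (c : coord) : list Z :=
  match c with
  | CT k => [0; k]
  | CQ k n => [1; k; Z.of_nat n]
  | CP k n => [2; k; Z.of_nat n]
  end%Z.

Definition datum_key (d : datum) : Z := match d with DH => 0 | DEta => 1 | DNu => 2 end%Z.

Definition atom_key (a : atom) : list Z :=
  match a with
  | AVar c => 0 :: coord_key c
  | ADer d l k => 1 :: datum_key d :: k :: Z.of_nat (length l) :: map Z.of_nat l
  | AFder n k => [2; k; Z.of_nat n]
  | AParam i => [3; Z.of_nat i]
  end%Z.

Fixpoint lex_compare {A} (cmp : A -> A -> comparison) (l1 l2 : list A) : comparison :=
  match l1, l2 with
  | [], [] => Eq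
  | [], _ => Lt
  | _, [] => Gt
  | a :: l1', b :: l2' => match cmp a b with Eq => lex_compare cmp l1' l2' | r => r end
  end.

Definition atom_compare (a b : atom) : comparison :=
  lex_compare Z.compare (atom_key a) (atom_key b).
Definition mono_compare : monomial -> monomial -> comparison := lex_compare atom_compare.

Definition datum_eq_dec (d d' : datum) : {d = d'} + {d <> d'}.
Proof. decide equality. Defined.

Definition atom_eq_dec (a b : atom) : {a = b} + {a <> b}.
Proof.
  decide equality; auto using coord_eq_dec, datum_eq_dec, Z.eq_dec, Nat.eq_dec, list_eq_dec.
Defined.

Fixpoint mono_insert (a : atom) (m : monomial) : monomial :=
  match m with
  | [] => [a]
  | b :: m' => match atom_compare a b with Gt => b :: mono_insert a m' | _ => a :: m end
  end.

Definition mono_mul (m1 m2 : monomial) : monomial := fold_right mono_insert m2 m1.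

(** The equality test makes [poly_insert] sound without proving that
    [mono_compare] is a total order. *)
Fixpoint poly_insert (t : Z * monomial) (p : polynomial) : polynomial :=
  match p with
  | [] => [t]
  | u :: p' =>
      match mono_compare (snd t) (snd u) with
      | Lt => t :: p
      | Gt => u :: poly_insert t p'
      | Eq =>
          if list_eq_dec atom_eq_dec (snd t) (snd u) then
            let s := (fst t + fst u)%Z in
            if Z.eqb s 0 then p' else (s, snd u) :: p'
          else t :: p
      end
  end.

Definition poly_add (p q : polynomial) : polynomial :=
  fold_right (fun t r => if Z.eqb (fst t) 0 then r else poly_insert t r) q p.

Definition poly_scale (t : Z * monomial) (q : polynomial) : polynomial :=
  map (fun u => ((fst t * fst u)%Z, mono_mul (snd t) (snd u))) q.

Definition poly_mul (p q : polynomial) : polynomial :=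
  fold_right (fun t r => poly_add (poly_scale t q) r) [] p.

(** Replacing [f^(n)(t^(k))] by [f^(n)(t)] is sound only on jets satisfying
    the delay equation. *)
Definition canon_atom (a : atom) : atom :=
  match a with
  | ADer d l k => ADer d (NatSort.sort l) k
  | AFder n _ => AFder n 0
  | _ => a
  end.

Fixpoint normalize (e : jexpr) : polynomial :=
  match e with
  | ECst z => if Z.eqb z 0 then [] else [(z, [])]
  | EAtom a => [(1%Z, [canon_atom a])]
  | EAdd a b => poly_add (normalize a) (normalize b)
  | EMul a b => poly_mul (normalize a) (normalize b)
  end.

Definition rhs_p : jexpr :=
  EAdd (EAdd (eX (evar_p eHtilde)) (EMul (epd (CP 0 0) eeta) (evar_q eHtilde)))
       (EMul (EAdd (epd (CP 0 0) enu) exidot) (evar_p eHtilde)).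

Definition rhs_q : jexpr :=
  EAdd (EAdd (eX (evar_q eHtilde)) (EMul (EAdd (epd (CQ 0 0) eeta) exidot) (evar_q eHtilde)))
       (EMul (epd (CQ 0 0) enu) (evar_p eHtilde)).

Definition rhs_t : jexpr :=
  EAdd (EAdd (EAdd (eX (evar_t eHtilde)) (EMul (EMul (ECst 2) exidot) (evar_t eHtilde)))
             (EMul (epd (CT 0) eeta) (evar_q eHtilde)))
       (EMul (epd (CT 0) enu) (evar_p eHtilde)).

Lemma Omega_identities_normalize :
  normalize (ESub (evar_p eOmega) rhs_p) = [] /\
  normalize (ESub (evar_q eOmega) rhs_q) = [] /\
  normalize (ESub (evar_t eOmega) rhs_t) = [].
Proof. split; [|split]; vm_compute; reflexivity. Qed.

(** * Interpretation *)

Section Interpretation.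
Context {alpha a1 a2 a3 a4 : R} {H : R -> R -> R -> R -> R -> R -> R} {f : R -> R}
  {eta nu : R -> R -> R -> R}.

Definition datum_fun (d : datum) : JFun :=
  match d with DH => Hj H | DEta => g_at eta 0 | DNu => g_at nu 0 end.

Definition interp_atom (x : Jet) (a : atom) : R :=
  match a with
  | AVar c => x c
  | ADer d l k => iter_pd (map (datum_var d) l) (datum_fun d) (Defs.shift k x)
  | AFder n k => Derive_n f n (x (CT k))
  | AParam i => nth i [alpha; a1; a2; a3; a4] 0
  end.

Fixpoint interp (x : Jet) (e : jexpr) : R :=
  match e with
  | ECst z => IZR z
  | EAdd a b => interp x a + interp x b
  | EMul a b => interp x a * interp x b
  | EAtom a => interp_atom x a
  end.

Definition interpF (e : jexpr) : JFun := fun x => interp x e.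

Lemma interp_shift_expr m e x : interp x (shift_expr m e) = interp (Defs.shift m x) e.
Proof.
  induction e as [z|a IHa b IHb|a IHa b IHb|[c|d l k|n k|i]]; simpl; try congruence;
    try now rewrite shift_shift.
  now destruct c.
Qed.

Hypotheses (HH : smooth6 H) (Hf : smooth1 f) (Heta : smooth3 eta) (Hnu : smooth3 nu).

Lemma datum_smooth d : smooth_jet (datum_vars d) (datum_fun d).
Proof. now destruct d. Qed.

Lemma datum_vars_NoDup d : NoDup (datum_vars d).
Proof. destruct d; repeat constructor; simpl; intuition discriminate. Qed.

Lemma datum_var_In d i : In (datum_var d i) (datum_vars d).
Proof.
  unfold datum_var. destruct (Nat.lt_ge_cases i (length (datum_vars d))).
  - now apply nth_In.
  - rewrite nth_overflow by assumption. destruct d; now left.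
Qed.

Lemma datum_var_map_In d l c : In c (map (datum_var d) l) -> In c (datum_vars d).
Proof. intros Hc. apply in_map_iff in Hc as [i [<- _]]. apply datum_var_In. Qed.

Lemma is_derive_iter_pd_line d l x u :
  is_derive (fun s => iter_pd (map (datum_var d) l) (datum_fun d) (line x u s)) 0
    (sum_over (datum_vars d) (fun c => u c * pd c (iter_pd (map (datum_var d) l) (datum_fun d)) x)).
Proof.
  destruct (datum_smooth d) as [Hdep Hsm].
  apply is_derive_line; [| | |now apply datum_vars_NoDup].
  - apply depends_only_iter_pd; [apply datum_var_map_In|exact Hdep].
  - intros c y Hc. apply (Hsm _ (datum_var_map_In d l)), Hc.
  - intros c Hc. apply (Hsm (c :: _)). intros c' [<-|Hc']; [exact Hc|].
    exact (datum_var_map_In d l c' Hc').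
Qed.

Lemma is_derive_interp_line w e x :
  is_derive (fun s => interp (line x (fun c => interp x (w c)) s) e) 0 (interp x (deriv w e)).
Proof.
  set (U := fun c => interp x (w c)).
  induction e as [z|a IHa b IHb|a IHa b IHb|[c|d l k|n k|i]]; simpl.
  - exact (is_derive_const (IZR z) 0).
  - exact (is_derive_plus _ _ _ _ _ IHa IHb).
  - apply is_derive_Reals.
    pose proof (derivable_pt_lim_mult _ _ _ _ _ (proj1 (is_derive_Reals _ _ _) IHa)
                                               (proj1 (is_derive_Reals _ _ _) IHb)) as Hm.
    cbv beta in Hm. now rewrite line_0 in Hm.
  - apply is_derive_affine.
  - apply (is_derive_ext (fun s => iter_pd (map (datum_var d) l) (datum_fun d)
                                     (line (Defs.shift k x) (Defs.shift k U) s))).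
    { intro s. now rewrite shift_line. }
    replace (interp x _) with (sum_over (datum_vars d) (fun c => Defs.shift k U c
      * pd c (iter_pd (map (datum_var d) l) (datum_fun d)) (Defs.shift k x)))
      by now destruct d.
    apply is_derive_iter_pd_line.
  - apply is_derive_comp_affine, Hf.
  - exact (is_derive_const _ 0).
Qed.

Lemma dirder_interp w e : dirder (fun y c => interp y (w c)) (interpF e) = interpF (deriv w e).
Proof.
  apply functional_extensionality; intro y.
  apply is_derive_unique, is_derive_interp_line.
Qed.

Lemma Dt_interp e : Dt (interpF e) = interpF (eD e).
Proof.
  unfold Dt, eD. rewrite <- dirder_interp. f_equal.
  apply functional_extensionality; intro y.
  apply functional_extensionality; intros [k|k n|k n]; reflexivity.
Qed.

Lemma pd_interp c e : pd c (interpF e) = interpF (epd c e).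
Proof.
  apply functional_extensionality; intro y. unfold pd.
  set (U := fun c' => interp y (unit_field c c')).
  assert (E : forall s, interpF e (upd y c s) = interp (line y U (s - y c)) e).
  { intro s. unfold interpF. f_equal. apply functional_extensionality; intro c'.
    unfold upd, line, U, unit_field. destruct (coord_eq_dec c' c) as [->|]; simpl; ring. }
  rewrite (Derive_ext _ _ _ E). apply is_derive_unique.
  rewrite <- (Rmult_1_l (interpF (epd c e) y)).
  apply (is_derive_comp (fun t => interp (line y U t) e) (fun s => s - y c)).
  - rewrite Rminus_diag. apply is_derive_interp_line.
  - auto_derive; [exact I|ring].
Qed.

Let xi := fun t => alpha * t + f t.

Lemma xi_at_interp k : xi_at xi k = interpF (exi k).
Proof. reflexivity. Qed.

Lemma prol_interp (isq : bool) k n :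
  prol xi (if isq then eta else nu) isq k n = interpF (eprol isq k n).
Proof.
  induction n as [|n IH].
  - now destruct isq.
  - apply functional_extensionality; intro y. simpl prol.
    rewrite IH, xi_at_interp, !Dt_interp. unfold interpF.
    cbn [eprol interp interp_atom ESub EVar]. ring.
Qed.

Lemma Xop_interp e : Xop xi eta nu (interpF e) = interpF (eX e).
Proof.
  unfold Xop, eX. rewrite <- dirder_interp. f_equal.
  apply functional_extensionality; intro y. apply functional_extensionality; intros [k|k n|k n].
  - reflexivity.
  - exact (f_equal (fun F => F y) (prol_interp true k n)).
  - exact (f_equal (fun F => F y) (prol_interp false k n)).
Qed.

Lemma var_p_interp e : var_p (interpF e) = interpF (evar_p e).
Proof.
  apply functional_extensionality; intro y. unfold var_p, Sp.
  rewrite !pd_interp, !Dt_interp. unfold interpF, evar_p.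
  cbn [interp interp_atom ESub EVar]. rewrite interp_shift_expr. cbn [interp ESub]. ring.
Qed.

Lemma var_q_interp e : var_q (interpF e) = interpF (evar_q e).
Proof.
  apply functional_extensionality; intro y. unfold var_q, Sp.
  rewrite !pd_interp, !Dt_interp. unfold interpF, evar_q.
  cbn [interp interp_atom ESub EVar]. rewrite interp_shift_expr. cbn [interp ESub]. ring.
Qed.

Lemma var_t_interp e : var_t (interpF e) = interpF (evar_t e).
Proof.
  apply functional_extensionality; intro y. unfold var_t, Sp.
  rewrite !pd_interp.
  change (fun z => z (CQ ?k 1) * interpF (epd (CQ ?k 1) e) z
                 + z (CP ?k 1) * interpF (epd (CP ?k 1) e) z) with (interpF (emomenta k e)).
  rewrite !Dt_interp. unfold interpF, evar_t.
  cbn [interp interp_atom ESub EVar]. rewrite interp_shift_expr. cbn [interp ESub]. ring.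
Qed.

Lemma Htilde_interp : Htilde a1 a2 a3 a4 H = interpF eHtilde.
Proof.
  apply functional_extensionality; intro y.
  unfold Htilde, interpF, eHtilde. simpl. unfold Hj. simpl. ring.
Qed.

Lemma Hamiltonian_data_interp :
  Htilde a1 a2 a3 a4 H = interpF eHtilde /\ Dt (xi_at xi 0) = interpF exidot /\
  g_at eta 0 = interpF eeta /\ g_at nu 0 = interpF enu.
Proof.
  split; [exact Htilde_interp|split; [|split; reflexivity]].
  rewrite xi_at_interp. apply Dt_interp.
Qed.

Lemma Omega_interp : Omega xi eta nu (interpF eHtilde) = interpF eOmega.
Proof.
  unfold Omega. rewrite Xop_interp, xi_at_interp, Dt_interp. reflexivity.
Qed.

Definition interp_monomial (x : Jet) (m : monomial) : R :=
  fold_right (fun a r => interp_atom x a * r) 1 m.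

Definition interp_polynomial (x : Jet) (p : polynomial) : R :=
  fold_right (fun t r => IZR (fst t) * interp_monomial x (snd t) + r) 0 p.

Lemma interp_mono_insert x a m :
  interp_monomial x (mono_insert a m) = interp_atom x a * interp_monomial x m.
Proof.
  induction m as [|b m IH]; simpl; [ring|].
  destruct (atom_compare a b); simpl; try rewrite IH; ring.
Qed.

Lemma interp_mono_mul x m1 m2 :
  interp_monomial x (mono_mul m1 m2) = interp_monomial x m1 * interp_monomial x m2.
Proof.
  induction m1 as [|a m1 IH]; simpl; [ring|].
  unfold mono_mul in *. simpl. rewrite interp_mono_insert, IH. ring.
Qed.

Lemma interp_poly_insert x t p :
  interp_polynomial x (poly_insert t p)
  = IZR (fst t) * interp_monomial x (snd t) + interp_polynomial x p.
Proof.
  induction p as [|u p IH]; simpl; [ring|].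
  destruct (mono_compare (snd t) (snd u)); simpl; try rewrite IH; try ring.
  destruct (list_eq_dec atom_eq_dec (snd t) (snd u)) as [E|]; simpl; [|ring].
  rewrite E. destruct (Z.eqb_spec (fst t + fst u) 0) as [Hsum|]; simpl.
  - replace (IZR (fst t)) with (- IZR (fst u)) by (rewrite <- opp_IZR; f_equal; lia). ring.
  - rewrite plus_IZR. ring.
Qed.

Lemma interp_poly_add x p q :
  interp_polynomial x (poly_add p q) = interp_polynomial x p + interp_polynomial x q.
Proof.
  induction p as [|t p IH]; simpl; [ring|].
  destruct (Z.eqb_spec (fst t) 0) as [->|]; rewrite ?interp_poly_insert, IH; simpl; ring.
Qed.

Lemma interp_poly_scale x t q :
  interp_polynomial x (poly_scale t q)
  = IZR (fst t) * interp_monomial x (snd t) * interp_polynomial x q.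
Proof.
  induction q as [|u q IH]; simpl; [ring|].
  rewrite mult_IZR, interp_mono_mul, IH. ring.
Qed.

Lemma interp_poly_mul x p q :
  interp_polynomial x (poly_mul p q) = interp_polynomial x p * interp_polynomial x q.
Proof.
  induction p as [|t p IH]; simpl; [ring|].
  rewrite interp_poly_add, interp_poly_scale, IH. ring.
Qed.

Lemma interp_normalize x : (forall a, interp_atom x (canon_atom a) = interp_atom x a) ->
  forall e, interp_polynomial x (normalize e) = interp x e.
Proof.
  intros Hcanon e.
  induction e as [z|a IHa b IHb|a IHa b IHb|a]; simpl.
  - destruct (Z.eqb_spec z 0) as [->|]; simpl; ring.
  - now rewrite interp_poly_add, IHa, IHb.
  - now rewrite interp_poly_mul, IHa, IHb.
  - rewrite Hcanon. ring.
Qed.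

Context {tau : R}.
Hypothesis Hper : forall t, f (t + tau) = f t.

Lemma interp_canon_atom x a : delay tau x -> interp_atom x (canon_atom a) = interp_atom x a.
Proof.
  intro Hdelay. destruct a as [c|d l k|n k|i]; simpl; try reflexivity.
  - rewrite (iter_pd_Permutation (datum_vars d) _ _ (map (datum_var d) l)); [reflexivity| | |].
    + apply datum_smooth.
    + apply Permutation_map, Permutation_sym, NatSort.Permuted_sort.
    + apply datum_var_map_In.
  - rewrite (Hdelay k). symmetry.
    apply (periodic_IZR (Derive_n f n)), Derive_n_periodic; assumption.
Qed.

Lemma interp_eq_of_normalize x (L R : jexpr) : delay tau x ->
  normalize (ESub L R) = [] -> interp x L = interp x R.
Proof.
  intros Hdelay HLR.
  pose proof (interp_normalize x (fun a => interp_canon_atom x a Hdelay) (ESub L R)) as E.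
  rewrite HLR in E. simpl in E. lra.
Qed.
End Interpretation.

Theorem lemma3 (tau a1 a2 a3 a4 alpha : R)
  (H : R -> R -> R -> R -> R -> R -> R) (f : R -> R) (eta nu : R -> R -> R -> R)
  (Htau : 0 < tau) (HH : smooth6 H) (Hf : smooth1 f)
  (Hper : forall t, f (t + tau) = f t)
  (Heta : smooth3 eta) (Hnu : smooth3 nu) :
  let xi := fun t => alpha * t + f t in
  let Ht := Htilde a1 a2 a3 a4 H in
  let Om := Omega xi eta nu Ht in
  let xidot := Dt (xi_at xi 0) in
  forall x : Jet, delay tau x ->
    var_p Om x = Xop xi eta nu (var_p Ht) x
                 + pd (CP 0 0) (g_at eta 0) x * var_q Ht x
                 + (pd (CP 0 0) (g_at nu 0) x + xidot x) * var_p Ht x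
 /\ var_q Om x = Xop xi eta nu (var_q Ht) x
                 + (pd (CQ 0 0) (g_at eta 0) x + xidot x) * var_q Ht x
                 + pd (CQ 0 0) (g_at nu 0) x * var_p Ht x
 /\ var_t Om x = Xop xi eta nu (var_t Ht) x
                 + 2 * xidot x * var_t Ht x
                 + pd (CT 0) (g_at eta 0) x * var_q Ht x
                 + pd (CT 0) (g_at nu 0) x * var_p Ht x.
Proof.
  cbv zeta. intros x Hdelay.
  destruct (@Hamiltonian_data_interp alpha a1 a2 a3 a4 H f eta nu HH Hf Heta Hnu)
    as (EHt & Exidot & Eeta & Enu).
  rewrite EHt, Exidot, Eeta, Enu, (Omega_interp HH Hf Heta Hnu),
    !(var_p_interp HH Hf Heta Hnu), !(var_q_interp HH Hf Heta Hnu),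
    !(var_t_interp HH Hf Heta Hnu), !(pd_interp HH Hf Heta Hnu), !(Xop_interp HH Hf Heta Hnu).
  destruct Omega_identities_normalize as (Np & Nq & Nt).
  split; [|split].
  - exact (interp_eq_of_normalize HH Hf Heta Hnu Hper x _ rhs_p Hdelay Np).
  - exact (interp_eq_of_normalize HH Hf Heta Hnu Hper x _ rhs_q Hdelay Nq).
  - exact (interp_eq_of_normalize HH Hf Heta Hnu Hper x _ rhs_t Hdelay Nt).
Qed.
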